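(* Let $\mathbf H$ be a symmetric positive semidefinite $d\times d$ matrix partitioned into diagonal blocks $\mathbf H_{11},\dots,\mathbf H_{LL}$, let $\mathbf B=\mathrm{blkdiag}(\mathbf H_{11},\dots,\mathbf H_{LL})$ and $\mathbf E=\mathbf H-\mathbf B$, and assume $T=\mathrm{Tr}(\mathbf H)>0$ (note $\mathrm{Tr}(\mathbf B)=T$). Let $\alpha>1$ and $\Lambda_*=\max\{\lambda_{\max}(\mathbf H),\lambda_{\max}(\mathbf B)\}$. Then $$\big|\widetilde{\mathcal R}_\alpha(\mathbf H)-\widetilde{\mathcal R}_\alpha(\mathbf B)\big|\le\alpha\Big(\frac{\Lambda_*}{T}\Big)^{\alpha-1}\frac{\sqrt d\,\|\mathbf E\|_F}{T}.$$
   Context: For a symmetric positive semidefinite matrix $\mathbf M$ with eigenvalues $\lambda_1,\dots,\lambda_m\ge0$ and $\mathrm{Tr}(\mathbf M)>0$, $\widetilde{\mathcal R}_\alpha(\mathbf M)=\sum_{i=1}^m(\lambda_i/\mathrm{Tr}(\mathbf M))^\alpha$ (with $0^\alpha=0$). $\|\cdot\|_F$ is the Frobenius norm. *)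

From HB Require Import structures.
From mathcomp Require Import all_boot all_order all_algebra.
From mathcomp Require Import all_classical all_reals all_analysis.
Set Implicit Arguments. Unset Strict Implicit. Unset Printing Implicit Defensive.
Import Order.TTheory GRing.Theory Num.Theory.
Local Open Scope ring_scope.

Section Defs.
Variable R : realType.

Definition psd (d : nat) (M : 'M[R]_d) : Prop :=
  M^T = M /\ forall v : 'cV[R]_d, 0 <= (v^T *m M *m v) 0 0.

(* s is the list of eigenvalues of M counted with (algebraic) multiplicity:
   the characteristic polynomial splits with exactly these roots *)
Definition eigvals_of (d : nat) (M : 'M[R]_d) (s : seq R) : Prop :=
  char_poly M = \prod_(x <- s) ('X - x%:P).

(* largest element of a list of (nonnegative) reals; 0 for the empty list *)
Definition lmax (s : seq R) : R := \big[Num.max/0]_(x <- s) x.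

(* normalized Renyi quantity computed from the eigenvalue list s and trace t;
   powR satisfies 0 `^ a = 0 for a <> 0 *)
Definition renyi_tilde (alpha : R) (s : seq R) (t : R) : R :=
  \sum_(x <- s) powR (x / t) alpha.

Definition blkdiag_part (d L : nat) (blk : 'I_d -> 'I_L) (M : 'M[R]_d) : 'M[R]_d :=
  \matrix_(i, j) (if blk i == blk j then M i j else 0).

Definition frob (m n : nat) (M : 'M[R]_(m, n)) : R :=
  Num.sqrt (\sum_i \sum_j (M i j) ^+ 2).

End Defs.

From HB Require Import structures.
From mathcomp Require Import all_boot all_order all_algebra.
From mathcomp Require Import all_classical all_reals all_analysis.
From mathcomp Require Import complex ring.
Import Order.TTheory GRing.Theory Num.Theory numFieldNormedType.Exports.
Local Open Scope ring_scope.
Set Implicit Arguments. Unset Strict Implicit. Unset Printing Implicit Defensive.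

(* Write H = P^* diag(x) P and B = Q^* diag(y) Q with P, Q unitary.  For W = Q P^*, the
   matrix Q (H - B) P^* has entries W_ik (x_k - y_i), hence
   ||H - B||_F^2 = sum_ik S_ik (x_k - y_i)^2 with the doubly stochastic S_ik = |W_ik|^2.
   Averaging through S, R~(H) - R~(B) = sum_ik S_ik ((x_k/T)^a - (y_i/T)^a), since
   Tr B = Tr H = T.  Each term is at most the Lipschitz constant a (Lam/T)^(a-1) of t^a
   on [0, Lam/T] times |x_k - y_i| / T, and Cauchy-Schwarz against the total weight
   sum_ik S_ik = d turns sum_ik S_ik |x_k - y_i| into at most sqrt d ||E||_F. *)

Section PowRLipschitz.
Variable R : realType.

Lemma powR_sub_le_gt0 (a u v : R) : 1 < a -> 0 < v -> v < u ->
  u `^ a - v `^ a <= a * u `^ (a - 1) * (u - v).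
Proof.
move=> a1 v0 vu.
have cont : {within [set` `[v, u]%R], continuous (@powR R ^~ a)}%classic.
  apply: derivable_within_continuous => x; rewrite in_itv /= => /andP[vx _].
  by apply: derivable_powR; rewrite in_itv /= andbT (lt_le_trans v0).
have deriv (x : R) : x \in `]v, u[ -> is_derive x 1 (@powR R ^~ a) (a * x `^ (a - 1)).
  by rewrite in_itv /= => /andP[vx _]; apply: is_derive1_powR; apply: lt_trans vx.
have [c /[!in_itv] /= /andP[vc cu] ->] := MVT vu deriv cont.
rewrite ler_pM2r ?subr_gt0 // ler_pM2l ?(lt_trans _ a1) //.
by apply: ge0_ler_powR; rewrite ?nnegrE ?subr_ge0 ?ltW // (lt_trans v0).
Qed.

Lemma powR_sub_le (a u v : R) : 1 < a -> 0 <= v <= u ->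
  u `^ a - v `^ a <= a * u `^ (a - 1) * (u - v).
Proof.
move=> a1 /andP[v0 vu]; have a0 : 0 < a by apply: lt_trans a1.
have [->|vu'] := eqVneq v u; first by rewrite !subrr mulr0.
have [->|v0'] := eqVneq v 0.
  rewrite powR0 ?gt_eqF // !subr0 -(mulr_powRB1 (le_trans v0 vu) a0).
  by rewrite -mulrA [leLHS]mulrC ler_peMl ?mulr_ge0 ?powR_ge0 ?(le_trans v0 vu) // ltW.
by apply: powR_sub_le_gt0; rewrite // lt_neqAle ?vu' ?vu // eq_sym v0' v0.
Qed.

Lemma powR_lipschitz (a m u v : R) : 1 < a -> 0 <= u <= m -> 0 <= v <= m ->
  `|u `^ a - v `^ a| <= a * m `^ (a - 1) * `|u - v|.
Proof.
move=> a1.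
wlog vu : u v / v <= u.
  move=> wl /[dup] um + /[dup] vm; have [/wl|/ltW/wl] := leP v u; first exact.
  by rewrite distrC [`|u - v|]distrC => /[apply] /[apply].
move=> /andP[u0 um] /andP[v0 _].
have a0 : 0 < a by apply: lt_trans a1.
have vu_a : v `^ a <= u `^ a by apply: (ge0_ler_powR (ltW a0)); rewrite ?nnegrE.
rewrite !ger0_norm ?subr_ge0 //.
apply: le_trans (powR_sub_le a1 _) _; first by rewrite v0.
rewrite ler_wpM2r ?subr_ge0 // ler_wpM2l ?(ltW a0) //.
by apply: ge0_ler_powR; rewrite ?nnegrE ?subr_ge0 ?(ltW a1) // (le_trans u0).
Qed.

End PowRLipschitz.

Lemma sqr_wsum_le (R : realDomainType) (I : finType) (w z : I -> R) :
  (forall i, 0 <= w i) ->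
  (\sum_i w i * z i) ^+ 2 <= (\sum_i w i) * \sum_i w i * z i ^+ 2.
Proof.
move=> w_ge0.
set W := \sum_i w i; set A := \sum_i w i * z i; set Q := \sum_i w i * z i ^+ 2.
have [W0|W_neq0] := eqVneq W 0.
  have w0 i : w i = 0 by apply: (psumr_eq0P (fun i _ => w_ge0 i) W0).
  by rewrite /A big1 ?expr0n ?W0 ?mul0r // => i _; rewrite w0 mul0r.
have W_gt0 : 0 < W by rewrite lt_neqAle eq_sym W_neq0 sumr_ge0.
(* expand the nonnegative variance [sum_i w_i (W z_i - A)^2 = W (W Q - A^2)] *)
have : 0 <= \sum_i w i * (W * z i - A) ^+ 2.
  by apply: sumr_ge0 => i _; rewrite mulr_ge0 ?sqr_ge0.
have -> : \sum_i w i * (W * z i - A) ^+ 2 = W * (W * Q - A ^+ 2).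
  rewrite (eq_bigr (fun i => W ^+ 2 * (w i * z i ^+ 2) - 2 * W * A * (w i * z i) + A ^+ 2 * w i));
    last by move=> i _; ring.
  by rewrite !big_split /= -!mulr_sumr sumrN -mulr_sumr -/W -/A -/Q; ring.
by rewrite pmulr_rge0 // subr_ge0.
Qed.

Definition doubly_stochastic (R : numDomainType) n (S : 'M[R]_n) :=
  [/\ forall i j, 0 <= S i j, forall i, \sum_j S i j = 1 & forall j, \sum_i S i j = 1].

Section DoublyStochastic.
Variables (R : rcfType) (n : nat) (S : 'M[R]_n).
Hypothesis S_ds : doubly_stochastic S.

Lemma doubly_stochastic_sumB (u v : 'I_n -> R) :
  \sum_k u k - \sum_i v i = \sum_i \sum_k S i k * (u k - v i).
Proof.
have [_ Srow Scol] := S_ds.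
transitivity (\sum_i \sum_k S i k * u k - \sum_i \sum_k S i k * v i); last first.
  by rewrite -sumrB; apply: eq_bigr => i _; rewrite -sumrB; apply: eq_bigr => k _; rewrite mulrBr.
congr (_ - _).
  by rewrite exchange_big; apply: eq_bigr => k _; rewrite -mulr_suml Scol mul1r.
by apply: eq_bigr => i _; rewrite -mulr_suml Srow mul1r.
Qed.

Lemma doubly_stochastic_wsum_le (u : 'I_n -> 'I_n -> R) :
  \sum_i \sum_k S i k * `|u i k| <= Num.sqrt n%:R * Num.sqrt (\sum_i \sum_k S i k * u i k ^+ 2).
Proof.
have [S_ge0 Srow _] := S_ds.
have wS : \sum_i \sum_k S i k = n%:R.
  by under eq_bigr do rewrite Srow; rewrite sumr_const card_ord.
have := sqr_wsum_le (fun p : 'I_n * 'I_n => `|u p.1 p.2|) (fun p => S_ge0 p.1 p.2).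
rewrite -(pair_bigA _ S) wS (pair_bigA _ (fun i k => S i k * `|u i k|)).
rewrite (pair_bigA _ (fun i k => S i k * u i k ^+ 2)) /=.
move=> CS; rewrite [X in _ * X](eq_bigr (fun p => S p.1 p.2 * u p.1 p.2 ^+ 2)) in CS;
  last by move=> p _; rewrite real_normK ?num_real.
rewrite -sqrtrM ?ler0n // -[leLHS]ger0_norm -?sqrtr_sqr ?ler_wsqrtr //.
by apply: sumr_ge0 => ? _; rewrite mulr_ge0.
Qed.

Lemma doubly_stochastic_sum_lipschitz (f : R -> R) (c : R) (u v : 'I_n -> R) : 0 <= c ->
  (forall i k, `|f (u k) - f (v i)| <= c * `|u k - v i|) ->
  `|\sum_k f (u k) - \sum_i f (v i)|
    <= c * (Num.sqrt n%:R * Num.sqrt (\sum_i \sum_k S i k * (u k - v i) ^+ 2)).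
Proof.
move=> c_ge0 f_lip; have [S_ge0 _ _] := S_ds.
rewrite doubly_stochastic_sumB; apply: le_trans (ler_norm_sum _ _ _) _.
apply: le_trans (ler_wpM2l c_ge0 (doubly_stochastic_wsum_le (fun i k => u k - v i))).
rewrite mulr_sumr; apply: ler_sum => i _; apply: le_trans (ler_norm_sum _ _ _) _.
rewrite mulr_sumr; apply: ler_sum => k _.
by rewrite normrM ger0_norm // mulrCA ler_wpM2l.
Qed.

End DoublyStochastic.

Lemma char_poly_similar (F : fieldType) n (P A : 'M[F]_n) : P \in unitmx ->
  char_poly (invmx P *m A *m P) = char_poly A.
Proof.
move=> Pu; rewrite /char_poly /char_poly_mx.
have -> : 'X%:M - map_mx polyC (invmx P *m A *m P) =
    map_mx polyC (invmx P) *m ('X%:M - map_mx polyC A) *m map_mx polyC P.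
  rewrite mulmxBr mulmxBl !map_mxM; congr (_ - _).
  by rewrite scalar_mxC -mulmxA -map_mxM mulVmx // map_mx1 mulmx1.
by rewrite !det_mulmx mulrC mulrA -det_mulmx -map_mxM mulmxV // map_mx1 det1 mul1r.
Qed.

Section FrobeniusC.
Variable C : numClosedFieldType.
Local Open Scope sesquilinear_scope.

Lemma mul_conjC_mul_real (a b : C) : b^* = b -> (a * b) * (a * b)^* = a * a^* * b ^+ 2.
Proof. by move=> bb; rewrite rmorphM [X in _ * (_ * X)]bb; ring. Qed.

Definition frobC2 m n (M : 'M[C]_(m, n)) : C := \sum_i \sum_j M i j * (M i j)^*.

Lemma frobC2_mxtrace m n (M : 'M[C]_(m, n)) : frobC2 M = \tr (M *m M^t*).
Proof. by apply: eq_bigr => i _; rewrite !mxE; apply: eq_bigr => j _; rewrite !mxE. Qed.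

Lemma frobC2_unitary_conj n (P Q A : 'M[C]_n) : P \is unitarymx -> Q \is unitarymx ->
  frobC2 (Q *m A *m P^t*) = frobC2 A.
Proof.
move=> /unitarymxP /mulmx1C PtP /unitarymxP /mulmx1C QtQ.
rewrite !frobC2_mxtrace !trmx_mul !map_mxM trmxCK !mulmxA.
rewrite -[_ *m P]mulmxA PtP mulmx1.
by rewrite mxtrace_mulC !mulmxA QtQ mul1mx.
Qed.

End FrobeniusC.

Section RealSpectral.
Variable R : realType.
Local Open Scope sesquilinear_scope.
Local Notation toC := (real_complex R).

Lemma conjC_toC (x : R) : (toC x)^* = toC x.
Proof. exact: conjc_real. Qed.

Lemma realsym_spectral n (A : 'M[R]_n) (s : seq R) : A^T = A -> eigvals_of A s ->
  exists P : 'M[R[i]]_n, exists xs : 'I_n -> R,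
    [/\ P \is unitarymx, map_mx toC A = P^t* *m diag_mx (\row_i toC (xs i)) *m P
      & perm_eq s (codom xs)].
Proof.
move=> A_sym A_eig; set Ac := map_mx toC A.
have Ac_normal : Ac \is normalmx.
  suff Ac_herm : Ac^t* = Ac by apply/normalmxP; rewrite Ac_herm.
  apply/matrixP => i j; rewrite !mxE conjC_toC.
  by have /matrixP /(_ j i) := A_sym; rewrite mxE => ->.
have Ac_eq := orthomx_spectralP Ac_normal.
set P := spectralmx Ac in Ac_eq; set sp := spectral_diag Ac in Ac_eq.
have P_unitary : P \is unitarymx by apply: spectral_unitarymx.
have sp_roots : perm_eq (map toC s) (codom (sp 0)).
  apply: prod_XsubC_eq; transitivity (char_poly Ac).
    rewrite -map_char_poly A_eig rmorph_prod big_map.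
    by apply: eq_bigr => x _; apply/esym/map_polyXsubC.
  rewrite Ac_eq char_poly_similar ?unitarymx_unit // char_poly_trig ?diag_mx_is_trig //.
  rewrite codomE big_map big_enum; apply: eq_bigr => i _; by rewrite mxE eqxx mulr1n.
pose xs i := complex.Re (sp 0 i).
have sp_real i : sp 0 i = toC (xs i).
  have : sp 0 i \in map toC s by rewrite (perm_mem sp_roots) codom_f.
  by case/mapP => x _ sp_x; rewrite /xs sp_x.
exists P, xs; split => //.
  rewrite -invmx_unitary // {1}Ac_eq; congr (_ *m diag_mx _ *m _).
  by apply/rowP => i; rewrite mxE sp_real.
apply: (perm_map_inj (@complexI R)); rewrite (perm_trans sp_roots) //.
have -> : codom (sp 0) = map toC (codom xs) by rewrite !codomE -[RHS]map_comp (eq_map sp_real).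
exact: perm_refl.
Qed.

Lemma sqr_frob_dist_spectral n (Hm Bm : 'M[R]_n) (P Q : 'M[R[i]]_n) (xs ys : 'I_n -> R) :
  P \is unitarymx -> Q \is unitarymx ->
  map_mx toC Hm = P^t* *m diag_mx (\row_i toC (xs i)) *m P ->
  map_mx toC Bm = Q^t* *m diag_mx (\row_i toC (ys i)) *m Q ->
  exists2 S : 'M[R]_n, doubly_stochastic S &
    \sum_i \sum_j (Hm - Bm) i j ^+ 2 = \sum_i \sum_k S i k * (xs k - ys i) ^+ 2.
Proof.
move=> P_unitary Q_unitary HP BQ.
set W := Q *m P^t*.
have /unitarymxP WWt : W \is unitarymx by rewrite mul_unitarymx ?trmxC_unitary.
have WtW := mulmx1C WWt.
pose S := \matrix_(i, k) Normc.normc (W i k) ^+ 2.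
have WtE i k : (W^t*) k i = (W i k)^* by rewrite 2!mxE.
have SE i k : toC (S i k) = W i k * (W i k)^* by rewrite mxE rmorphXn -sqr_normc.
have W_frob : Q *m map_mx toC (Hm - Bm) *m P^t* = \matrix_(i, k) (W i k * toC (xs k - ys i)).
  have /unitarymxP PPt := P_unitary; have /unitarymxP QQt := Q_unitary.
  rewrite map_mxB HP BQ mulmxBr mulmxBl !mulmxA QQt mul1mx -!mulmxA PPt mulmx1 !mulmxA.
  apply/matrixP => i k; rewrite mul_mx_diag -mulmxA mul_diag_mx !mxE rmorphB /=; ring.
exists S; first split.
- by move=> i k; rewrite mxE sqr_ge0.
- move=> i; apply: (@complexI R); rewrite rmorph_sum rmorph1.
  have /matrixP /(_ i i) := WWt; rewrite !mxE eqxx mulr1n => <-.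
  by apply: eq_bigr => k _; rewrite WtE; apply: SE.
- move=> k; apply: (@complexI R); rewrite rmorph_sum rmorph1.
  have /matrixP /(_ k k) := WtW; rewrite !mxE eqxx mulr1n => <-.
  by apply: eq_bigr => i _; rewrite WtE mulrC; apply: SE.
apply: (@complexI R); transitivity (frobC2 (map_mx toC (Hm - Bm))).
  rewrite rmorph_sum; apply: eq_bigr => i _; rewrite rmorph_sum; apply: eq_bigr => j _.
  by rewrite !mxE rmorphXn expr2; congr (_ * _); apply/esym/conjC_toC.
rewrite -(frobC2_unitary_conj _ P_unitary Q_unitary) W_frob rmorph_sum.
apply: eq_bigr => i _; rewrite rmorph_sum; apply: eq_bigr => k _.
by rewrite mxE mul_conjC_mul_real ?conjC_toC // -SE rmorphM rmorphXn.
Qed.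

End RealSpectral.

Section PsdSpectrum.
Variable R : realType.

Lemma lmax_ge (s : seq R) x : x \in s -> x <= lmax s.
Proof.
rewrite /lmax; elim: s => [//|y s IHs]; rewrite inE big_cons le_max.
by case/orP => [/eqP->|/IHs->]; rewrite ?lexx ?orbT.
Qed.

Lemma quadformE n (M : 'M[R]_n) (v : 'cV[R]_n) :
  (v^T *m M *m v) 0 0 = \sum_i \sum_j v i 0 * M i j * v j 0.
Proof.
rewrite mxE exchange_big /=; apply: eq_bigr => j _.
by rewrite mxE mulr_suml; apply: eq_bigr => i _; rewrite !mxE.
Qed.

Lemma psd_eigval_ge0 n (A : 'M[R]_n) (s : seq R) x :
  psd A -> eigvals_of A s -> x \in s -> 0 <= x.
Proof.
move=> [_ A_psd] A_eig x_s.
have /eigenvalueP [v vA v_neq0] : eigenvalue A x.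
  by rewrite eigenvalue_root_char A_eig root_prod_XsubC.
have vv_gt0 : 0 < (v *m v^T) 0 0.
  have sqr_v_ge0 j : 0 <= v 0 j ^+ 2 by apply: sqr_ge0.
  rewrite mxE (eq_bigr (fun j => v 0 j ^+ 2)) => [|j _]; last by rewrite mxE expr2.
  rewrite lt_def sumr_ge0 // andbT; apply: contra v_neq0 => /eqP vv0.
  apply/eqP/rowP => j; apply/eqP; rewrite mxE -sqrf_eq0.
  by rewrite (psumr_eq0P (fun j _ => sqr_v_ge0 j) vv0).
by have := A_psd v^T; rewrite trmxK vA -scalemxAl mxE pmulr_lge0.
Qed.

Lemma psd_blkdiag_part d L (blk : 'I_d -> 'I_L) (H : 'M[R]_d) :
  psd H -> psd (blkdiag_part blk H).
Proof.
move=> [H_sym H_psd]; split.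
  apply/matrixP => i j; rewrite !mxE eq_sym.
  by have /matrixP /(_ j i) := H_sym; rewrite mxE => ->.
(* the quadratic form of the block part splits into those of H on the blocks of v *)
move=> v; pose vb (l : 'I_L) := \col_i (if blk i == l then v i 0 else 0).
rewrite quadformE (_ : \sum_i _ = \sum_l ((vb l)^T *m H *m vb l) 0 0).
  by apply: sumr_ge0 => l _; apply: H_psd.
under [RHS]eq_bigr do rewrite quadformE.
rewrite [RHS]exchange_big; apply: eq_bigr => i _; rewrite [RHS]exchange_big; apply: eq_bigr => j _.
rewrite (bigD1 (blk i)) //= big1 ?addr0 => [|l /negPf li]; last first.
  by rewrite !mxE eq_sym li !mul0r.
by rewrite !mxE eqxx [blk j == _]eq_sym; case: ifP; rewrite ?mulr0 ?mul0r.
Qed.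

Lemma mxtrace_blkdiag_part d L (blk : 'I_d -> 'I_L) (M : 'M[R]_d) :
  \tr (blkdiag_part blk M) = \tr M.
Proof. by apply: eq_bigr => i _; rewrite mxE eqxx. Qed.

Lemma renyi_tilde_codom n (xs : 'I_n -> R) (s : seq R) a t :
  perm_eq s (codom xs) -> renyi_tilde a s t = \sum_i powR (xs i / t) a.
Proof. by move=> s_xs; rewrite /renyi_tilde (perm_big _ s_xs) codomE big_map big_enum. Qed.

End PsdSpectrum.

Theorem mainTheorem8 (R : realType) (d L : nat) (blk : 'I_d -> 'I_L)
  (H : 'M[R]_d) (alpha : R) (sH sB : seq R) :
  {homo blk : i j / (i <= j)%N >-> (i <= j)%N} ->
  psd H ->
  0 < \tr H ->
  1 < alpha ->
  eigvals_of H sH ->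
  eigvals_of (blkdiag_part blk H) sB ->
  let B := blkdiag_part blk H in
  let E := H - B in
  let T := \tr H in
  let Lam := Num.max (lmax sH) (lmax sB) in
  `| renyi_tilde alpha sH (\tr H) - renyi_tilde alpha sB (\tr B) |
    <= alpha * powR (Lam / T) (alpha - 1) * (Num.sqrt (d%:R) * frob E / T).
Proof.
move=> _ H_psd T_gt0 alpha_gt1 H_eig B_eig; cbv zeta.
set B := blkdiag_part blk H; set T := \tr H; set Lam := Num.max _ _.
have B_psd : psd B := psd_blkdiag_part blk H_psd.
have [P [xs [P_unitary HP H_xs]]] := realsym_spectral H_psd.1 H_eig.
have [Q [ys [Q_unitary BQ B_ys]]] := realsym_spectral B_psd.1 B_eig.
have [S S_ds frobE] := sqr_frob_dist_spectral P_unitary Q_unitary HP BQ.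
have eig_bound (A : 'M[R]_d) s (zs : 'I_d -> R) k : psd A -> eigvals_of A s ->
    perm_eq s (codom zs) -> lmax s <= Lam -> 0 <= zs k / T <= Lam / T.
  move=> A_psd A_eig s_zs s_Lam; have zs_k : zs k \in s by rewrite (perm_mem s_zs) codom_f.
  rewrite divr_ge0 ?(psd_eigval_ge0 A_psd A_eig zs_k) ?(ltW T_gt0) //=.
  by rewrite ler_pM2r ?invr_gt0 // (le_trans (lmax_ge zs_k)).
rewrite /B mxtrace_blkdiag_part -/T (renyi_tilde_codom _ _ H_xs) (renyi_tilde_codom _ _ B_ys).
pose c := alpha * powR (Lam / T) (alpha - 1) / T.
rewrite [leRHS](_ : _ = c * (Num.sqrt d%:R * frob (H - blkdiag_part blk H))); last first.
  by rewrite /c; ring.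
rewrite /frob frobE.
apply: (doubly_stochastic_sum_lipschitz S_ds (f := fun x => powR (x / T) alpha)) => [|i k].
  by rewrite !mulr_ge0 ?invr_ge0 ?powR_ge0 ?(ltW T_gt0) // ltW // (lt_trans _ alpha_gt1).
apply: le_trans (powR_lipschitz alpha_gt1 (eig_bound _ _ _ _ H_psd H_eig H_xs _)
  (eig_bound _ _ _ _ B_psd B_eig B_ys _)) _; rewrite ?le_max ?lexx ?orbT //.
by rewrite -mulrBl normrM [`|T^-1|]gtr0_norm ?invr_gt0 // mulrA mulrAC.
Qed.
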